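(* Let $z\in\mathbb{R}^n$ satisfy $\dim\big(\Diamond_n\cap(z+\Diamond_n)\big)=n$. Then there exists $\epsilon>0$ such that $\mathcal{N}\big(\Diamond_n\cap(\lambda z+\Diamond_n)\big)=\mathcal{N}\big(\Diamond_n\cap(z+\Diamond_n)\big)$ for all $\lambda\in(1-\epsilon,1+\epsilon)$.
   Context: $\Diamond_n=\operatorname{conv}(\pm e_1,\ldots,\pm e_n)\subset\mathbb{R}^n$. For an $n$-dimensional polytope $P\subset\mathbb{R}^n$, its normal fan $\mathcal{N}(P)$ is the fan whose maximal cones are $(\mathbb{R}_+(P-v))^{\circ}$ for $v$ ranging over the vertices of $P$, where $\mathbb{R}_+X$ is the set of nonnegative linear combinations of elements of $X$ and $C^{\circ}=\{x:x\cdot y\ge0\text{ for all }y\in C\}$. *)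

From mathcomp Require Import all_boot all_order all_algebra.
From mathcomp Require Import boolp classical_sets reals.
Set Implicit Arguments. Unset Strict Implicit. Unset Printing Implicit Defensive.
Import Order.TTheory GRing.Theory Num.Theory.
Local Open Scope ring_scope.
Local Open Scope classical_set_scope.

Section Polytopes.
Variables (R : realType) (n : nat).
Notation vec := 'rV[R]_n.

Definition dotv (x y : vec) : R := \sum_(i < n) x ord0 i * y ord0 i.

Definition conv_hull (X : set vec) : set vec :=
  [set x | exists (k : nat) (lam : 'I_k -> R) (p : 'I_k -> vec),
     (forall i, 0 <= lam i) /\ \sum_(i < k) lam i = 1 /\
     (forall i, X (p i)) /\ x = \sum_(i < k) lam i *: p i].

Definition cone_hull (X : set vec) : set vec :=
  [set x | exists (k : nat) (lam : 'I_k -> R) (p : 'I_k -> vec),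
     (forall i, 0 <= lam i) /\
     (forall i, X (p i)) /\ x = \sum_(i < k) lam i *: p i].

Definition dual_cone (C : set vec) : set vec :=
  [set x | forall y, C y -> 0 <= dotv x y].

Definition cross_polytope : set vec :=
  conv_hull [set x | exists i : 'I_n,
                       x = delta_mx ord0 i \/ x = - delta_mx ord0 i].

Definition translate (z : vec) (X : set vec) : set vec :=
  [set y | exists2 x, X x & y = z + x].

Definition aff_indep (k : nat) (p : 'I_k.+1 -> vec) : bool :=
  row_free (\matrix_(i < k) (p (lift ord0 i) - p ord0)).

Definition aff_dim_eq (S : set vec) (d : nat) : Prop :=
  (exists p : 'I_d.+1 -> vec, (forall i, S (p i)) /\ aff_indep p) /\
  ~ (exists p : 'I_d.+2 -> vec, (forall i, S (p i)) /\ aff_indep p).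

Definition is_vertex (P : set vec) (v : vec) : Prop :=
  P v /\ exists c : vec, forall x, P x -> x <> v -> dotv c v < dotv c x.

Definition cone_face (C F : set vec) : Prop :=
  exists a : vec, (forall y, C y -> 0 <= dotv a y) /\
                  F = C `&` [set y | dotv a y = 0].

Definition normal_fan (P : set vec) : set (set vec) :=
  [set F | exists v, is_vertex P v /\
     cone_face (dual_cone (cone_hull [set y | exists2 x, P x & y = x - v])) F].

End Polytopes.

From mathcomp Require Import all_boot all_order all_algebra.
From mathcomp Require Import boolp classical_sets reals.
From mathcomp Require Import ring lra.
Set Implicit Arguments. Unset Strict Implicit. Unset Printing Implicit Defensive.
Import Order.TTheory GRing.Theory Num.Theory.
Local Open Scope ring_scope.
Local Open Scope classical_set_scope.

(* For n > 0 the intersection is the lens [{x : |x|_1 <= 1, |x - z|_1 <= 1}], and full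
   dimensionality forces [|z|_1 < 2].  The normal cone at a vertex v of the lens for [mu z] is
   determined by its pattern: which of the two constraints are tight, and the sign vectors of v
   and [v - mu z] on the tight ones.  For [mu'] close to [mu] every vertex has a twin vertex with
   the same pattern in the lens for [mu' z]: if only [|v|_1 = 1] is tight, v is a signed unit
   vector and stays put; if only [|v - mu z|_1 = 1] is tight, [v - mu z] is a signed unit vector
   and v moves with [mu z]; if both are tight, v is rescaled towards the signed unit vector of a
   coordinate where v and [v - mu z] have the same sign and are bounded away from 0, which
   exists quantitatively because [|z|_1 < 2].  Hence the two normal fans coincide. *)

Section L1Norm.
Variables (R : realType) (n : nat).
Notation vec := 'rV[R]_n.
Notation e j := (delta_mx ord0 j : vec).

Definition l1norm (x : vec) : R := \sum_(i < n) `|x ord0 i|.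

Lemma dotvDr (c x y : vec) : dotv c (x + y) = dotv c x + dotv c y.
Proof. by rewrite /dotv -big_split /=; apply: eq_bigr => i _; rewrite mxE mulrDr. Qed.

Lemma dotvZr (c x : vec) (a : R) : dotv c (a *: x) = a * dotv c x.
Proof. by rewrite /dotv mulr_sumr; apply: eq_bigr => i _; rewrite mxE mulrCA. Qed.

Lemma dotvNr (c x : vec) : dotv c (- x) = - dotv c x.
Proof. by rewrite -scaleN1r dotvZr mulN1r. Qed.

Lemma dotvBr (c x y : vec) : dotv c (x - y) = dotv c x - dotv c y.
Proof. by rewrite dotvDr dotvNr. Qed.

Lemma dotv_sumr (c : vec) k (F : 'I_k -> vec) :
  dotv c (\sum_(i < k) F i) = \sum_(i < k) dotv c (F i).
Proof.
apply: (big_morph _ (dotvDr c)).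
by rewrite /dotv big1 // => i _; rewrite mxE mulr0.
Qed.

Lemma delta_entry (j i : 'I_n) : e j ord0 i = (i == j)%:R.
Proof. by rewrite mxE eqxx /= eq_sym. Qed.

Lemma dotv_delta (c : vec) j : dotv c (e j) = c ord0 j.
Proof.
rewrite /dotv (bigD1 j) //= big1 ?addr0; first by rewrite delta_entry eqxx mulr1.
by move=> i /negbTE h; rewrite delta_entry h mulr0.
Qed.

Lemma delta_neq0 j : e j != 0.
Proof.
apply/negP => /eqP /matrixP /(_ ord0 j); rewrite delta_entry eqxx mxE => /eqP.
by rewrite oner_eq0.
Qed.

Lemma l1norm_ge0 (x : vec) : 0 <= l1norm x.
Proof. exact: sumr_ge0. Qed.

Lemma l1norm_bigD1 (x : vec) j :
  l1norm x = `|x ord0 j| + \sum_(i < n | i != j) `|x ord0 i|.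
Proof. by rewrite /l1norm (bigD1 j). Qed.

Lemma ler_norm_l1norm (x : vec) j : `|x ord0 j| <= l1norm x.
Proof. by rewrite (l1norm_bigD1 x j) lerDl; apply: sumr_ge0. Qed.

Lemma l1normD (x y : vec) : l1norm (x + y) <= l1norm x + l1norm y.
Proof.
rewrite /l1norm -big_split /=; apply: ler_sum => i _; rewrite mxE; exact: ler_normD.
Qed.

Lemma l1normZ (a : R) (x : vec) : l1norm (a *: x) = `|a| * l1norm x.
Proof. by rewrite /l1norm mulr_sumr; apply: eq_bigr => i _; rewrite mxE normrM. Qed.

Lemma l1normN (x : vec) : l1norm (- x) = l1norm x.
Proof. by rewrite -scaleN1r l1normZ normrN normr1 mul1r. Qed.

Lemma l1norm_delta j : l1norm (e j) = 1.
Proof.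
rewrite (l1norm_bigD1 _ j) big1 ?addr0; first by rewrite delta_entry eqxx normr1.
by move=> i /negbTE hij; rewrite delta_entry hij normr0.
Qed.

Lemma l1norm_sum_le k (lam : 'I_k -> R) (p : 'I_k -> vec) :
  (forall i, 0 <= lam i) ->
  l1norm (\sum_(i < k) lam i *: p i) <= \sum_(i < k) lam i * l1norm (p i).
Proof.
move=> lam_ge0; elim/big_ind2: _ => //.
- by rewrite /l1norm big1 // => i _; rewrite mxE normr0.
- by move=> x1 x2 y1 y2 h1 h2; apply: le_trans (l1normD _ _) _; exact: lerD.
- by move=> i _; rewrite l1normZ ger0_norm.
Qed.

Lemma cross_polytope_sub_l1ball : @cross_polytope R n `<=` [set x | l1norm x <= 1].
Proof.
move=> _ [k [lam [p [lam_ge0 [lam_sum1 [hp ->]]]]]] /=.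
apply: le_trans (l1norm_sum_le p lam_ge0) _; rewrite -lam_sum1.
by apply: ler_sum => i _; have [j [->|->]] := hp i; rewrite ?l1normN l1norm_delta mulr1.
Qed.
End L1Norm.

Section CrossPolytope.
Variables (R : realType) (n : nat).
Notation vec := 'rV[R]_n.
Notation e j := (delta_mx ord0 j : vec).

Lemma split_lshift m k (i : 'I_m) : split (lshift k i) = inl i.
Proof. exact: (unsplitK (inl i)). Qed.

Lemma split_rshift m k (i : 'I_k) : split (rshift m i) = inr i.
Proof. exact: (unsplitK (inr i)). Qed.

Lemma l1ball_sub_cross_polytope : (0 < n)%N ->
  [set x | l1norm x <= 1] `<=` @cross_polytope R n.
Proof.
move=> n_gt0 x /= x_le1.
(* x = sum_i x_i^+ e_i + x_i^- (-e_i), plus the slack spread evenly over all 2n vertices *)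
pose r := (1 - l1norm x) / (n + n)%:R.
have r_ge0 : 0 <= r by apply: divr_ge0; [rewrite subr_ge0 | rewrite ler0n].
pose lam (j : 'I_(n + n)) := match split j with
  | inl i => (`|x ord0 i| + x ord0 i) / 2 + r
  | inr i => (`|x ord0 i| - x ord0 i) / 2 + r end.
pose p (j : 'I_(n + n)) := match split j with inl i => e i | inr i => - e i end.
exists (n + n)%N, lam, p; split; [|split; [|split]].
- move=> j; rewrite /lam; case: (split j) => i; apply: addr_ge0 => //;
  apply: divr_ge0 => //; have := ler_norm (x ord0 i); have := ler_norm (- x ord0 i);
  rewrite normrN; lra.
- rewrite big_split_ord /= /lam.
  under eq_bigr do rewrite split_lshift.
  under [X in _ + X = _]eq_bigr do rewrite split_rshift.
  rewrite !big_split /= addrACA -big_split /= sumr_const card_ord -mulrnDr.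
  have -> : \sum_(i < n) ((`|x ord0 i| + x ord0 i) / 2 + (`|x ord0 i| - x ord0 i) / 2)
            = l1norm x by apply: eq_bigr => i _; field.
  rewrite -mulr_natr /r mulfVK; first by rewrite addrC subrK.
  by rewrite pnatr_eq0 addn_eq0 andbb -lt0n.
- by move=> j; rewrite /p; case: (split j) => i; exists i; [left|right].
- rewrite big_split_ord /= /lam /p.
  under eq_bigr do rewrite split_lshift.
  under [X in _ = _ + X]eq_bigr do rewrite split_rshift.
  apply/matrixP => a b; rewrite ord1 !mxE !summxE.
  rewrite [X in _ = _ + X](bigD1 b) //= (bigD1 b) //= !big1; first last.
  + by move=> i /negbTE h; rewrite !mxE eqxx /= eq_sym h ?mulr0 ?oppr0 ?mulr0.
  + by move=> i /negbTE h; rewrite !mxE eqxx /= eq_sym h ?mulr0 ?oppr0 ?mulr0.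
  by rewrite !mxE !eqxx /= !addr0; field.
Qed.

Lemma cross_polytopeE : (0 < n)%N -> @cross_polytope R n = [set x | l1norm x <= 1].
Proof.
move=> n_gt0; apply/seteqP; split; first exact: cross_polytope_sub_l1ball.
exact: l1ball_sub_cross_polytope.
Qed.
End CrossPolytope.

Section NormalFan.
Variables (R : realType) (n : nat).
Notation vec := 'rV[R]_n.

Definition lens (b : vec) : set vec :=
  [set x | l1norm x <= 1 /\ l1norm (x - b) <= 1].

Lemma cross_polytope_meet_translate (b : vec) : (0 < n)%N ->
  @cross_polytope R n `&` translate b (@cross_polytope R n) = lens b.
Proof.
move=> n_gt0; rewrite cross_polytopeE //; apply/seteqP; split => x /=.
  move=> [x_le1 [y y_le1 x_eq]]; split => //.
  by rewrite x_eq addrAC subrr add0r.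
move=> [x_le1 xb_le1]; split => //; exists (x - b) => //; by rewrite addrC subrK.
Qed.

Definition normal_cone (S : set vec) (v : vec) : set vec :=
  [set c | forall x, S x -> dotv c v <= dotv c x].

Lemma dual_cone_hullE (S : set vec) v :
  dual_cone (cone_hull [set y | exists2 x, S x & y = x - v]) = normal_cone S v.
Proof.
apply/seteqP; split => c /=.
  move=> hc x Sx; rewrite -subr_ge0 -dotvBr; apply: hc.
  exists 1%N, (fun _ => 1), (fun _ => x - v); split; [by []|split].
    by move=> i; exists x.
  by rewrite big_ord1 scale1r.
move=> hc _ [k [lam [p [lam_ge0 [hp ->]]]]].
rewrite dotv_sumr; apply: sumr_ge0 => i _; rewrite dotvZr; apply: mulr_ge0 => //.
by have [x Sx ->] := hp i; rewrite dotvBr subr_ge0; apply: hc.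
Qed.

Definition normal_cone_match (P Q : set vec) :=
  forall v, is_vertex P v -> exists2 w, is_vertex Q w & normal_cone P v = normal_cone Q w.

Lemma normal_fan_sub (P Q : set vec) :
  normal_cone_match P Q -> normal_fan P `<=` normal_fan Q.
Proof.
move=> PQ F [v [hv hF]]; have [w hw Nvw] := PQ v hv.
by exists w; split => //; rewrite dual_cone_hullE -Nvw -dual_cone_hullE.
Qed.

Lemma normal_fan_eq (P Q : set vec) :
  normal_cone_match P Q -> normal_cone_match Q P -> normal_fan P = normal_fan Q.
Proof. by move=> PQ QP; apply/seteqP; split; apply: normal_fan_sub. Qed.
End NormalFan.

Section ForSmall.
Variable R : realType.

Definition for_small (P : R -> Prop) :=
  exists2 t0, 0 < t0 & forall t, 0 < t -> t <= t0 -> P t.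

Lemma for_smallI (P Q : R -> Prop) :
  for_small P -> for_small Q -> for_small (fun t => P t /\ Q t).
Proof.
move=> [t1 t1_gt0 hP] [t2 t2_gt0 hQ]; exists (Num.min t1 t2); first by rewrite lt_min t1_gt0.
by move=> t t_gt0; rewrite le_min => /andP[t1t t2t]; split; [apply: hP | apply: hQ].
Qed.

Lemma for_small_seq (I : eqType) (s : seq I) (P : I -> R -> Prop) :
  (forall i, for_small (P i)) -> for_small (fun t => forall i, i \in s -> P i t).
Proof.
move=> hP; elim: s => [|a s IH]; first by exists 1.
have [t0 t0_gt0 h] := for_smallI (hP a) IH; exists t0 => // t t_gt0 tt0 i.
by have [Pa Ps] := h t t_gt0 tt0; rewrite inE => /orP[/eqP ->|]; last exact: Ps.
Qed.

Lemma for_small_all (I : finType) (P : I -> R -> Prop) :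
  (forall i, for_small (P i)) -> for_small (fun t => forall i, P i t).
Proof.
move=> /(for_small_seq (enum I)) [t0 t0_gt0 h]; exists t0 => // t t_gt0 tt0 i.
by apply: h; rewrite ?mem_enum.
Qed.

Lemma for_small_ex (P : R -> Prop) : for_small P -> exists2 t, 0 < t & P t.
Proof. by move=> [t0 t0_gt0 h]; exists t0 => //; apply: h. Qed.
End ForSmall.

Section SmallSteps.
Variables (R : realType) (n : nat).
Notation vec := 'rV[R]_n.

Definition sgv (y : vec) : vec := map_mx Num.sg y.

(* The one-sided derivative of [`|_|] (resp. [l1norm]) in direction [d] at any point of sign [s]. *)
Definition abs_slope (s d : R) : R := if s == 0 then `|d| else s * d.

Definition l1slope (s d : vec) : R := \sum_(i < n) abs_slope (s ord0 i) (d ord0 i).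

Lemma l1norm_sgv (y : vec) : l1norm y = dotv (sgv y) y.
Proof. by apply: eq_bigr => i _; rewrite mxE normrEsg. Qed.

Lemma addrZ_neq (v w : vec) (t : R) : t != 0 -> w != 0 -> v + t *: w != v.
Proof. by move=> t_neq0 w_neq0; rewrite -subr_eq0 addrAC subrr add0r scaler_eq0 negb_or t_neq0. Qed.

Lemma abs_slope_le (y d : R) : abs_slope (Num.sg y) d <= `|y + d| - `|y|.
Proof.
rewrite /abs_slope sgr_cp0; case: eqP => [->|/eqP y_neq0]; first by rewrite add0r normr0 subr0.
rewrite lerBrDl [`|y|]normrEsg -mulrDr; apply: le_trans (ler_norm _) _.
by rewrite normrM normr_sg y_neq0 mul1r.
Qed.

Lemma l1norm_subgrad (y d : vec) : l1norm y + l1slope (sgv y) d <= l1norm (y + d).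
Proof.
rewrite -lerBrDl /l1norm -sumrB; apply: ler_sum => i _; rewrite !mxE.
exact: abs_slope_le.
Qed.

Lemma normD_small (y d : R) :
  for_small (fun t => `|y + t * d| = `|y| + t * abs_slope (Num.sg y) d).
Proof.
rewrite /abs_slope sgr_cp0; case: eqP => [->|/eqP y_neq0].
  by exists 1 => // t t_gt0 _; rewrite add0r normr0 add0r normrM gtr0_norm.
have y_gt0 : 0 < `|y| by rewrite normr_gt0.
exists (`|y| / (`|d| + 1)) => [|t t_gt0]; first by rewrite divr_gt0 ?ltr_pwDr.
rewrite ler_pdivlMr ?ltr_pwDr // => td_small.
have td_lt : t * `|d| < `|y| by nra.
have : - (t * `|d|) <= t * d <= t * `|d|.
  by have := ler_norm d; have := ler_norm (- d); rewrite normrN; nra.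
move=> /andP[tdl tdr].
case: (ltrgtP y 0) => y0; last by move: y_neq0; rewrite y0 eqxx.
  by rewrite (ltr0_norm y0) ltr0_sg // in td_lt *; rewrite ltr0_norm; lra.
by rewrite (gtr0_norm y0) gtr0_sg // in td_lt *; rewrite gtr0_norm; lra.
Qed.

Lemma l1norm_small_step (y d : vec) :
  for_small (fun t => l1norm (y + t *: d) = l1norm y + t * l1slope (sgv y) d).
Proof.
have [t0 t0_gt0 h] := for_small_all (fun i => normD_small (y ord0 i) (d ord0 i)).
exists t0 => // t t_gt0 tt0; rewrite /l1norm /l1slope mulr_sumr -big_split /=.
by apply: eq_bigr => i _; rewrite !mxE h.
Qed.

Lemma l1ball_interior_step (y d : vec) :
  l1norm y < 1 -> for_small (fun t => l1norm (y + t *: d) <= 1).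
Proof.
move=> y_lt1; have d_ge0 := l1norm_ge0 d.
exists ((1 - l1norm y) / (l1norm d + 1)) => [|t t_gt0].
  by apply: divr_gt0; [rewrite subr_gt0 | lra].
rewrite ler_pdivlMr; last by lra.
move=> td_small; apply: le_trans (l1normD _ _) _; rewrite l1normZ gtr0_norm //; nra.
Qed.

Lemma l1ball_small_step (y d : vec) : l1norm y <= 1 ->
  (l1norm y = 1 -> l1slope (sgv y) d <= 0) ->
  for_small (fun t => l1norm (y + t *: d) <= 1).
Proof.
rewrite le_eqVlt => /orP[/eqP y_eq1 slope_le0|y_lt1 _]; last exact: l1ball_interior_step.
have [t0 t0_gt0 h] := l1norm_small_step y d; exists t0 => // t t_gt0 tt0.
by rewrite h // y_eq1; have := slope_le0 y_eq1; nra.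
Qed.

Lemma lens_small_step (b v d : vec) : lens b v ->
  (l1norm v = 1 -> l1slope (sgv v) d <= 0) ->
  (l1norm (v - b) = 1 -> l1slope (sgv (v - b)) d <= 0) ->
  exists2 t, 0 < t & lens b (v + t *: d).
Proof.
move=> [v_le1 vb_le1] slopeA slopeB.
have [t t_gt0 [ht1 ht2]] :=
  for_small_ex (for_smallI (l1ball_small_step v_le1 slopeA) (l1ball_small_step vb_le1 slopeB)).
by exists t => //; split; rewrite // addrAC.
Qed.
End SmallSteps.

Section Patterns.
Variables (R : realType) (n : nat).
Notation vec := 'rV[R]_n.

Definition same_pattern (b v b' v' : vec) :=
  [/\ l1norm v = 1 <-> l1norm v' = 1, l1norm v = 1 -> sgv v = sgv v',
      l1norm (v - b) = 1 <-> l1norm (v' - b') = 1 &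
      l1norm (v - b) = 1 -> sgv (v - b) = sgv (v' - b')].

Lemma same_pattern_sym b v b' v' : same_pattern b v b' v' -> same_pattern b' v' b v.
Proof.
move=> [hA sA hB sB]; split; [exact: iff_sym hA | | exact: iff_sym hB |].
- by move=> v'_eq1; rewrite (sA (proj2 hA v'_eq1)).
- by move=> v'b'_eq1; rewrite (sB (proj2 hB v'b'_eq1)).
Qed.

Variables (b v b' v' : vec).
Hypotheses (lens_v : lens b v) (lens_v' : lens b' v') (pat : same_pattern b v b' v').

(* The directions [x - v'] feasible at [v'] have nonpositive slope on the tight constraints,
   which are also those of [v]. *)
Lemma lens_step_toward x : lens b' x -> exists2 t, 0 < t & lens b (v + t *: (x - v')).
Proof.
have [hA sA hB sB] := pat; move=> [x_le1 xb_le1]; apply: lens_small_step => //.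
  move=> v_eq1; rewrite (sA v_eq1); have := l1norm_subgrad v' (x - v').
  by rewrite [v' + _]addrC subrK (proj1 hA v_eq1); lra.
move=> vb_eq1; rewrite (sB vb_eq1); have := l1norm_subgrad (v' - b') (x - v').
by rewrite [v' - b' + _]addrC addrA subrK (proj1 hB vb_eq1); lra.
Qed.

Lemma normal_cone_sub_pattern : normal_cone (lens b) v `<=` normal_cone (lens b') v'.
Proof.
move=> c hc x lens_x; have [t t_gt0 lens_vt] := lens_step_toward lens_x.
by have := hc _ lens_vt; rewrite dotvDr dotvZr dotvBr; nra.
Qed.

Lemma is_vertex_pattern : is_vertex (lens b) v -> is_vertex (lens b') v'.
Proof.
move=> [_ [c hc]]; split => //; exists c => x lens_x x_neq_v'.
have [t t_gt0 lens_vt] := lens_step_toward lens_x.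
have /eqP vt_neq_v : v + t *: (x - v') != v by rewrite addrZ_neq ?gt_eqF ?subr_eq0 //; apply/eqP.
by have := hc _ lens_vt vt_neq_v; rewrite dotvDr dotvZr dotvBr; nra.
Qed.
End Patterns.

Lemma normal_cone_pattern (R : realType) (n : nat) (b v b' v' : 'rV[R]_n) :
  lens b v -> lens b' v' -> same_pattern b v b' v' ->
  normal_cone (lens b) v = normal_cone (lens b') v'.
Proof.
move=> lens_v lens_v' pat; apply/seteqP; split; first exact: normal_cone_sub_pattern.
exact/normal_cone_sub_pattern/same_pattern_sym.
Qed.

Section PatternCases.
Variables (R : realType) (n : nat).
Implicit Types b v : 'rV[R]_n.

Lemma lt1_eq1_iff (x y : R) : x < 1 -> y < 1 -> (x = 1 <-> y = 1).
Proof. by move=> x_lt1 y_lt1; split=> eq1; [move: x_lt1 | move: y_lt1]; rewrite eq1 ltxx. Qed.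

Lemma same_pattern_first_loose b v b' v' : l1norm v < 1 -> l1norm v' < 1 ->
  v - b = v' - b' -> same_pattern b v b' v'.
Proof.
move=> v_lt1 v'_lt1 e; split; rewrite ?e //; first exact: lt1_eq1_iff.
by move=> v_eq1; move: v_lt1; rewrite v_eq1 ltxx.
Qed.

Lemma same_pattern_second_loose b v b' v' : l1norm (v - b) < 1 -> l1norm (v' - b') < 1 ->
  v = v' -> same_pattern b v b' v'.
Proof.
move=> vb_lt1 vb'_lt1 e; subst v'; split => //; first exact: lt1_eq1_iff.
by move=> vb_eq1; move: vb_lt1; rewrite vb_eq1 ltxx.
Qed.
End PatternCases.

Section ScalarFacts.
Variable R : realType.
Implicit Types a c s mu L : R.

Lemma sg_pm1 a : a != 0 -> Num.sg a = 1 \/ Num.sg a = -1.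
Proof. by case: sgrP => //; [left | right]. Qed.

Lemma norm_sign_subZ_lt1 s a L mu : s = 1 \/ s = -1 -> 0 < mu ->
  mu * L < 2 -> `|a| <= L ->
  (`|s - mu * a| + mu * (L - `|a|) < 1 <-> L < 2 * (s * a)).
Proof.
move=> s_pm1 mu_gt0 muL_lt2 a_leL.
have muaL : mu * `|a| <= mu * L by rewrite ler_pM2l.
case: s_pm1 => ->; rewrite ?mul1r ?mulN1r.
- case: (lerP 0 a) => a0; rewrite ?(ger0_norm a0) ?(ltr0_norm a0) in a_leL muaL *.
  + by case: (lerP 0 (1 - mu * a)) => h;
      rewrite ?(ger0_norm h) ?(ltr0_norm h); split; nra.
  + by rewrite ger0_norm; [split; nra | nra].
- case: (lerP 0 a) => a0; rewrite ?(ger0_norm a0) ?(ltr0_norm a0) in a_leL muaL *.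
  + by rewrite ltr0_norm; [split; nra | nra].
  + by case: (lerP 0 (-1 - mu * a)) => h;
      rewrite ?(ger0_norm h) ?(ltr0_norm h); split; nra.
Qed.

Lemma triangle_gap_le a c :
  `|a| + `|a - c| - `|c| <= 2 * `|a| /\ `|a| + `|a - c| - `|c| <= 2 * `|a - c|.
Proof.
have := ler_normB a c; have := ler_normD (a - c) c; rewrite subrK; split; lra.
Qed.

Lemma sg_triangle_gap a c : 0 < `|a| + `|a - c| - `|c| ->
  a != 0 /\ Num.sg a = Num.sg (a - c).
Proof.
move=> gap_gt0; have [la lac] := triangle_gap_le a c.
have a_neq0 : a != 0 by rewrite -normr_gt0; lra.
have ac_neq0 : a - c != 0 by rewrite -normr_gt0; lra.
split => //; move: gap_gt0.
case: (ltrgtP a 0) => a0; last by move: a_neq0; rewrite a0 eqxx.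
- case: (ltrgtP (a - c) 0) => ac0; last by move: ac_neq0; rewrite ac0 eqxx.
  + by rewrite !ltr0_sg.
  + by rewrite (ltr0_norm a0) (gtr0_norm ac0) ltr0_norm; lra.
- case: (ltrgtP (a - c) 0) => ac0; last by move: ac_neq0; rewrite ac0 eqxx.
  + by rewrite (gtr0_norm a0) (ltr0_norm ac0) gtr0_norm; lra.
  + by rewrite !gtr0_sg.
Qed.

Lemma sg_between a c : `|a| + `|a - c| = `|c| -> Num.sg c * a = `|a|.
Proof.
case: (ltrgtP a 0) => a0 e; last by rewrite a0 mulr0 normr0.
- case: (lerP 0 c) => c0; last by rewrite ltr0_sg // mulN1r ltr0_norm.
  by move: e; rewrite (ltr0_norm a0) (ger0_norm c0) ltr0_norm; lra.
- case: (lerP c 0) => c0; last by rewrite gtr0_sg // mul1r gtr0_norm.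
  by move: e; rewrite (gtr0_norm a0) (ler0_norm c0) gtr0_norm; lra.
Qed.
End ScalarFacts.

Section Vertices.
Variables (R : realType) (n : nat).
Notation vec := 'rV[R]_n.
Notation e j := (delta_mx ord0 j : vec).
Implicit Types b v y d : vec.

Lemma l1slope_dotv (s d : vec) : (forall k, s ord0 k = 0 -> d ord0 k = 0) ->
  l1slope s d = dotv s d.
Proof.
by move=> supp; apply: eq_bigr => k _; rewrite /abs_slope; case: eqP => // /supp ->; rewrite normr0 mulr0.
Qed.

(* Moving [v] along [d] and [-d] stays in the lens, contradicting the supporting hyperplane. *)
Lemma vertex_no_line b v d : is_vertex (lens b) v -> d != 0 ->
  (l1norm v = 1 -> l1slope (sgv v) d <= 0 /\ l1slope (sgv v) (- d) <= 0) ->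
  (l1norm (v - b) = 1 -> l1slope (sgv (v - b)) d <= 0 /\ l1slope (sgv (v - b)) (- d) <= 0) ->
  False.
Proof.
move=> [lens_v [c hc]] d_neq0 slopeA slopeB.
have [t1 t1_gt0 lens1] := lens_small_step lens_v (fun e => (slopeA e).1) (fun e => (slopeB e).1).
have [t2 t2_gt0 lens2] := lens_small_step lens_v (fun e => (slopeA e).2) (fun e => (slopeB e).2).
have /eqP ne1 : v + t1 *: d != v by rewrite addrZ_neq ?gt_eqF.
have /eqP ne2 : v + t2 *: - d != v by rewrite addrZ_neq ?gt_eqF ?oppr_eq0.
have := hc _ lens1 ne1; have := hc _ lens2 ne2.
by rewrite !dotvDr !dotvZr dotvNr; nra.
Qed.

Lemma vertex_tight b v : (0 < n)%N -> is_vertex (lens b) v ->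
  l1norm v = 1 \/ l1norm (v - b) = 1.
Proof.
move=> n_gt0 hv; have [|A_loose] := pselect (l1norm v = 1); first by left.
have [|B_loose] := pselect (l1norm (v - b) = 1); first by right.
by case: (vertex_no_line hv (delta_neq0 _ (Ordinal n_gt0))).
Qed.

Lemma l1slope_pair y i j : y ord0 i != 0 -> y ord0 j != 0 ->
  let d := Num.sg (y ord0 i) *: e i - Num.sg (y ord0 j) *: e j in
  l1slope (sgv y) d <= 0 /\ l1slope (sgv y) (- d) <= 0.
Proof.
move=> yi_neq0 yj_neq0 d.
have supp k : sgv y ord0 k = 0 -> d ord0 k = 0.
  rewrite mxE => /eqP; rewrite sgr_eq0 => /eqP yk0.
  rewrite /d !mxE !eqxx /=.
  have [ki|_] := eqVneq k i; first by move: yi_neq0; rewrite -ki yk0 eqxx.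
  have [kj|_] := eqVneq k j; first by move: yj_neq0; rewrite -kj yk0 eqxx.
  by rewrite !mulr0 subrr.
have dot0 : dotv (sgv y) d = 0.
  by rewrite /d dotvBr !dotvZr !dotv_delta !mxE -!expr2 !sqr_sg yi_neq0 yj_neq0 subrr.
clearbody d.
have suppN k : sgv y ord0 k = 0 -> (- d) ord0 k = 0.
  by move=> /supp dk0; rewrite mxE dk0 oppr0.
by rewrite (l1slope_dotv supp) (l1slope_dotv suppN) dotvNr dot0 oppr0.
Qed.

Lemma pair_neq0 y i j : i != j -> y ord0 i != 0 ->
  Num.sg (y ord0 i) *: e i - Num.sg (y ord0 j) *: e j != 0.
Proof.
move=> ij yi_neq0; apply/negP => /eqP /matrixP /(_ ord0 i) /eqP.
by rewrite !mxE !eqxx /= (negbTE ij) mulr0 subr0 mulr1 sgr_eq0 (negbTE yi_neq0).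
Qed.

Lemma l1norm1_single y : l1norm y = 1 ->
  (forall i j, i != j -> y ord0 i != 0 -> y ord0 j != 0 -> False) ->
  exists2 j, y = Num.sg (y ord0 j) *: e j & y ord0 j != 0.
Proof.
move=> y_eq1 single.
have [j yj_neq0] : exists j, y ord0 j != 0.
  apply/not_existsP => y0; move: y_eq1; rewrite /l1norm big1 => [/eqP|i _].
    by rewrite eq_sym oner_eq0.
  by have /negP := y0 i; rewrite negbK => /eqP ->; rewrite normr0.
have others k : k != j -> y ord0 k = 0.
  move=> kj; have [//|yk_neq0] := eqVneq (y ord0 k) 0.
  by case: (single k j kj yk_neq0 yj_neq0).
exists j => //; apply/matrixP => a k; rewrite ord1 !mxE eqxx /=.
have [->|kj] := eqVneq k j; last by rewrite (others _ kj) mulr0.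
have yj_norm : `|y ord0 j| = 1.
  by rewrite -y_eq1 (l1norm_bigD1 _ j) big1 ?addr0 // => i ij; rewrite others // normr0.
by rewrite mulr1 {1}(numEsg (y ord0 j)) yj_norm mulr1.
Qed.

Lemma vertex_tight_first_only b v : is_vertex (lens b) v ->
  l1norm v = 1 -> l1norm (v - b) < 1 ->
  exists2 j, v = Num.sg (v ord0 j) *: e j & v ord0 j != 0.
Proof.
move=> hv A_tight B_loose; apply: l1norm1_single => // i j ij vi vj.
apply: (vertex_no_line hv (pair_neq0 ij vi)) => [_|vb_eq1]; first exact: l1slope_pair.
by move: B_loose; rewrite vb_eq1 ltxx.
Qed.

Lemma vertex_tight_second_only b v : is_vertex (lens b) v ->
  l1norm (v - b) = 1 -> l1norm v < 1 ->
  exists2 j, v - b = Num.sg ((v - b) ord0 j) *: e j & (v - b) ord0 j != 0.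
Proof.
move=> hv B_tight A_loose; apply: l1norm1_single => // i j ij vi vj.
apply: (vertex_no_line hv (pair_neq0 ij vi)) => [v_eq1|_]; last exact: l1slope_pair.
by move: A_loose; rewrite v_eq1 ltxx.
Qed.

Lemma l1norm_signed_delta_subZ (s mu : R) (z : vec) j : 0 <= mu ->
  l1norm (s *: e j - mu *: z) = `|s - mu * z ord0 j| + mu * (l1norm z - `|z ord0 j|).
Proof.
move=> mu_ge0; rewrite (l1norm_bigD1 _ j) (l1norm_bigD1 z j) addrAC subrr add0r mulr_sumr.
congr (_ + _); first by rewrite !mxE !eqxx /= mulr1.
apply: eq_bigr => i /negbTE ij; rewrite !mxE eqxx /= ij mulr0 sub0r normrN normrM.
by rewrite ger0_norm.
Qed.

Lemma l1norm_signed_delta_subZ_lt1 (s mu : R) (z : vec) j :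
  s = 1 \/ s = -1 -> 0 < mu -> mu * l1norm z < 2 ->
  l1norm (s *: e j - mu *: z) < 1 <-> l1norm z < 2 * (s * z ord0 j).
Proof.
move=> s_pm1 mu_gt0 muz_lt2; rewrite l1norm_signed_delta_subZ ?ltW //.
exact: norm_sign_subZ_lt1 (ler_norm_l1norm _ _).
Qed.
End Vertices.

Section Blend.
Variables (R : realType) (n : nat).
Notation vec := 'rV[R]_n.
Notation e j := (delta_mx ord0 j : vec).

Definition blend (r : R) (y : vec) k : vec := r *: y + ((1 - r) * Num.sg (y ord0 k)) *: e k.

Variables (y : vec) (k : 'I_n) (r eta : R).
Hypotheses (y_eq1 : l1norm y = 1) (yk_ge : eta <= `|y ord0 k|) (yk_neq0 : y ord0 k != 0).
Hypotheses (r_gt0 : 0 < r) (r_small : r * (1 - eta) < 1).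

Lemma sgv_blend : sgv (blend r y k) = sgv y.
Proof.
set s := Num.sg (y ord0 k).
apply/matrixP => a i; rewrite ord1 !mxE eqxx /=.
have [->|ik] := eqVneq i k; last by rewrite mulr0 addr0 sgrM gtr0_sg // mul1r.
have pos : 0 < r * `|y ord0 k| + (1 - r).
  have : r * eta <= r * `|y ord0 k| by rewrite ler_pM2l.
  by move: r_small; rewrite mulrBr mulr1; lra.
rewrite mulr1 {1}(numEsg (y ord0 k)) -/s.
have -> : r * (s * `|y ord0 k|) + (1 - r) * s = s * (r * `|y ord0 k| + (1 - r)) by ring.
by rewrite sgrM (gtr0_sg pos) mulr1 /s sgr_id.
Qed.

Lemma l1norm_blend : l1norm (blend r y k) = 1.
Proof.
have ss : Num.sg (y ord0 k) * Num.sg (y ord0 k) = 1 by rewrite -expr2 sqr_sg yk_neq0.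
rewrite l1norm_sgv sgv_blend dotvDr !dotvZr dotv_delta -l1norm_sgv y_eq1 mxE.
by rewrite -mulrA ss; ring.
Qed.
End Blend.

Section Twins.
Variables (R : realType) (n : nat) (z : 'rV[R]_n) (mu mu1 : R).
Notation vec := 'rV[R]_n.
Notation e j := (delta_mx ord0 j : vec).
Hypotheses (n_gt0 : (0 < n)%N) (mu_gt0 : 0 < mu) (mu1_gt0 : 0 < mu1).
Hypotheses (muz_lt2 : mu * l1norm z < 2) (mu1z_lt2 : mu1 * l1norm z < 2).

Lemma exists_ge_mean (F : 'I_n -> R) : exists k, (\sum_(i < n) F i) / n%:R <= F k.
Proof.
have [k _ k_max] := arg_maxP F (isT : xpredT (Ordinal n_gt0)); exists k.
rewrite ler_pdivrMr ?ltr0n // -[n in n%:R]card_ord mulr_natr -sumr_const.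
by apply: ler_sum => i _; apply: k_max.
Qed.

(* At a doubly tight point [v] of [lens (mu *: z)] some coordinate is at least this far from 0 in
   both [v] and [v - mu *: z]: the triangle gaps [|v_i| + |v_i - mu z_i| - |mu z_i|] sum to
   [2 - mu |z|_1]. *)
Definition margin : R := (2 - mu * l1norm z) / (2 * n%:R).

Lemma margin_gt0 : 0 < margin.
Proof. by apply: divr_gt0; [rewrite subr_gt0 | rewrite mulr_gt0 ?ltr0n]. Qed.

Lemma doubly_tight_coord (v : vec) : l1norm v = 1 -> l1norm (v - mu *: z) = 1 ->
  exists k, [/\ v ord0 k != 0, Num.sg (v ord0 k) = Num.sg ((v - mu *: z) ord0 k),
                margin <= `|v ord0 k| & margin <= `|(v - mu *: z) ord0 k|].
Proof.
move=> v_eq1 vb_eq1; set b := mu *: z.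
pose gap i := `|v ord0 i| + `|v ord0 i - b ord0 i| - `|b ord0 i|.
have gap_sum : \sum_(i < n) gap i = 2 - mu * l1norm z.
  rewrite /gap !sumrB big_split /= -/(l1norm v) -/(l1norm b).
  have -> : \sum_(i < n) `|v ord0 i - b ord0 i| = l1norm (v - b).
    by apply: eq_bigr => i _; rewrite !mxE.
  by rewrite v_eq1 vb_eq1 l1normZ gtr0_norm //; lra.
have [k gap_k] := exists_ge_mean gap; exists k.
have two_margin : 2 * margin <= gap k.
  suff -> : 2 * margin = (\sum_(i < n) gap i) / n%:R by [].
  by rewrite gap_sum /margin; field; rewrite pnatr_eq0 -lt0n.
have [vk_neq0 sg_eq] := sg_triangle_gap (lt_le_trans (mulr_gt0 (ltr0n _ 2) margin_gt0) two_margin).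
have [gap_v gap_vb] := triangle_gap_le (v ord0 k) (b ord0 k).
have -> : (v - b) ord0 k = v ord0 k - b ord0 k by rewrite !mxE.
by rewrite /gap in two_margin; split => //; lra.
Qed.

Lemma doubly_tight_twin (v : vec) : mu1 * (1 - margin) < mu ->
  l1norm v = 1 -> l1norm (v - mu *: z) = 1 ->
  exists2 v', lens (mu1 *: z) v' & same_pattern (mu *: z) v (mu1 *: z) v'.
Proof.
move=> ratio v_eq1 vb_eq1.
have [k [vk_neq0 sg_eq v_margin vb_margin]] := doubly_tight_coord v_eq1 vb_eq1.
have vbk_neq0 : (v - mu *: z) ord0 k != 0 by rewrite -normr_gt0 (lt_le_trans margin_gt0).
set r := mu1 / mu.
have r_gt0 : 0 < r by apply: divr_gt0.
have r_small : r * (1 - margin) < 1 by rewrite mulrAC ltr_pdivrMr // mul1r.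
have blend_sub : blend r v k - mu1 *: z = blend r (v - mu *: z) k.
  by rewrite /blend -sg_eq scalerBr scalerA /r divfK ?gt_eqF // addrAC.
have v'_eq1 := l1norm_blend v_eq1 v_margin vk_neq0 r_gt0 r_small.
have v'b_eq1 := l1norm_blend vb_eq1 vb_margin vbk_neq0 r_gt0 r_small.
have sgv_v' := sgv_blend v_margin r_gt0 r_small.
have sgv_v'b := sgv_blend vb_margin r_gt0 r_small.
exists (blend r v k); first by split; rewrite ?blend_sub ?v'_eq1 ?v'b_eq1.
by split; rewrite ?blend_sub ?v'_eq1 ?v'b_eq1 ?sgv_v' ?sgv_v'b.
Qed.

Lemma first_only_twin (v : vec) : is_vertex (lens (mu *: z)) v ->
  l1norm v = 1 -> l1norm (v - mu *: z) < 1 ->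
  exists2 v', lens (mu1 *: z) v' & same_pattern (mu *: z) v (mu1 *: z) v'.
Proof.
move=> hv v_eq1 vb_lt1; have [j v_eq vj_neq0] := vertex_tight_first_only hv v_eq1 vb_lt1.
have s_pm1 := sg_pm1 vj_neq0.
have vb1_lt1 : l1norm (v - mu1 *: z) < 1.
  rewrite v_eq; apply/(l1norm_signed_delta_subZ_lt1 j s_pm1 mu1_gt0 mu1z_lt2).
  by apply/(l1norm_signed_delta_subZ_lt1 j s_pm1 mu_gt0 muz_lt2); rewrite -v_eq.
exists v; first by split; [rewrite v_eq1 | exact: ltW].
exact: same_pattern_second_loose.
Qed.

Lemma second_only_twin (v : vec) : is_vertex (lens (mu *: z)) v ->
  l1norm (v - mu *: z) = 1 -> l1norm v < 1 ->
  exists2 v', lens (mu1 *: z) v' & same_pattern (mu *: z) v (mu1 *: z) v'.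
Proof.
move=> hv vb_eq1 v_lt1; have [j vb_eq vbj_neq0] := vertex_tight_second_only hv vb_eq1 v_lt1.
set s := Num.sg _ in vb_eq.
have s_pm1 : - s = 1 \/ - s = -1.
  by rewrite /s; case: (sg_pm1 vbj_neq0) => ->; [right | left; rewrite opprK].
have l1norm_opp w : l1norm (w *: z + s *: e j) = l1norm ((- s) *: e j - w *: z).
  by rewrite -l1normN opprD scaleNr addrC.
have v_eq : v = mu *: z + s *: e j by rewrite -vb_eq addrC subrK.
have v1_lt1 : l1norm (mu1 *: z + s *: e j) < 1.
  rewrite l1norm_opp; apply/(l1norm_signed_delta_subZ_lt1 j s_pm1 mu1_gt0 mu1z_lt2).
  by apply/(l1norm_signed_delta_subZ_lt1 j s_pm1 mu_gt0 muz_lt2); rewrite -l1norm_opp -v_eq.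
exists (mu1 *: z + s *: e j).
  by split; [exact: ltW | rewrite addrAC subrr add0r -vb_eq vb_eq1].
by apply: same_pattern_first_loose; rewrite // addrAC subrr add0r.
Qed.

Lemma lens_normal_cone_match : mu1 * (1 - margin) < mu ->
  normal_cone_match (lens (mu *: z)) (lens (mu1 *: z)).
Proof.
move=> ratio v hv; have lens_v := hv.1.
suff [v' lens_v' pat] : exists2 v', lens (mu1 *: z) v' & same_pattern (mu *: z) v (mu1 *: z) v'.
  by exists v'; [exact: is_vertex_pattern lens_v lens_v' pat hv | exact: normal_cone_pattern].
have [v_le1 vb_le1] := lens_v.
have loose (x : R) : x <= 1 -> x <> 1 -> x < 1 by move=> x_le1 /eqP; rewrite lt_neqAle x_le1 andbT.
have [v_eq1|v_neq1] := pselect (l1norm v = 1);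
  have [vb_eq1|vb_neq1] := pselect (l1norm (v - mu *: z) = 1).
- exact: doubly_tight_twin.
- exact: first_only_twin hv v_eq1 (loose _ vb_le1 vb_neq1).
- exact: second_only_twin hv vb_eq1 (loose _ v_le1 v_neq1).
- by have [] := vertex_tight n_gt0 hv.
Qed.
End Twins.

Section FullDimension.
Variables (R : realType) (n : nat) (z : 'rV[R]_n).

(* If [|z|_1 >= 2], every point of the lens is on a segment from 0 to [z] in each coordinate,
   so the lens lies in the hyperplane [<sgv z, x> = 1]. *)
Lemma lens_sub_hyperplane : 2 <= l1norm z -> lens z `<=` [set x | dotv (sgv z) x = 1].
Proof.
move=> z_ge2 x [x_le1 xz_le1] /=.
pose gap i := `|x ord0 i| + `|x ord0 i - z ord0 i| - `|z ord0 i|.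
have gap_ge0 i : 0 <= gap i.
  rewrite /gap subr_ge0; have := ler_normB (x ord0 i) (x ord0 i - z ord0 i).
  by rewrite opprB addrCA subrr addr0.
have gap_sum : \sum_(i < n) gap i = l1norm x + l1norm (x - z) - l1norm z.
  rewrite /gap sumrB big_split /=; do 2 congr (_ + _).
  by apply: eq_bigr => i _; rewrite !mxE.
have sum_ge0 : 0 <= \sum_(i < n) gap i by apply: sumr_ge0.
have gap0 : \sum_(i < n) gap i = 0 by apply/eqP; rewrite eq_le sum_ge0 gap_sum; lra.
have x_eq1 : l1norm x = 1 by move: sum_ge0; rewrite gap_sum; lra.
rewrite -x_eq1 /l1norm /dotv; apply: eq_bigr => i _; rewrite mxE; apply: sg_between.
by have := psumr_eq0P (fun i _ => gap_ge0 i) gap0 (i := i) isT; rewrite /gap; lra.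
Qed.

Lemma lens_full_dim : aff_dim_eq (lens z) n -> l1norm z < 2.
Proof.
move=> [[p [lens_p p_indep]] _]; rewrite ltNge; apply/negP => z_ge2.
set M := \matrix_(i < n) (p (lift ord0 i) - p ord0) in p_indep.
have M_sgv : M *m (sgv z)^T = 0.
  apply/matrixP => i a; rewrite ord1 !mxE.
  have -> : \sum_j M i j * (sgv z)^T j ord0 = dotv (sgv z) (p (lift ord0 i) - p ord0).
    by apply: eq_bigr => j _; rewrite !mxE mulrC.
  by rewrite dotvBr !(lens_sub_hyperplane z_ge2) ?subrr.
have sgv0 : (sgv z)^T = 0.
  have M_unit : M \in unitmx by rewrite -row_free_unit.
  by rewrite -(mulKmx M_unit (sgv z)^T) M_sgv mulmx0.
suff : l1norm z = 0 by lra.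
rewrite /l1norm big1 // => i _; move/matrixP: sgv0 => /(_ i ord0); rewrite !mxE => /eqP.
by rewrite sgr_eq0 => /eqP ->; rewrite normr0.
Qed.
End FullDimension.

Lemma margin_window (R : realType) (th q lam : R) : 0 < th -> 0 <= q -> th + q <= 1 ->
  1 - th < lam < 1 + th ->
  [/\ 0 < lam, lam * q < th + q, lam * (1 - th) < 1 & 1 - (th + (1 - lam) * q) < lam].
Proof. by move=> th_gt0 q_ge0 thq_le1 /andP[lam_gt lam_lt]; split; nra. Qed.

Section NearOne.
Variables (R : realType) (n : nat) (z : 'rV[R]_n).
Hypotheses (n_gt0 : (0 < n)%N) (z_lt2 : l1norm z < 2).

Let q := l1norm z / (2 * n%:R).

Let n_neq0 : n%:R != 0 :> R. Proof. by rewrite pnatr_eq0 -lt0n. Qed.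

Lemma marginE mu : margin z mu = margin z 1 + (1 - mu) * q.
Proof. by rewrite /margin /q; field. Qed.

Lemma lens_normal_fan_near1 lam : 1 - margin z 1 < lam < 1 + margin z 1 ->
  normal_fan (lens (lam *: z)) = normal_fan (lens z).
Proof.
move=> lam_near.
have th_gt0 : 0 < margin z 1 by apply: margin_gt0; rewrite ?mul1r.
have q_ge0 : 0 <= q by rewrite /q divr_ge0 ?mulr_ge0 ?l1norm_ge0.
have thq : margin z 1 + q = n%:R^-1 by rewrite /margin /q; field.
have thq_le1 : margin z 1 + q <= 1 by rewrite thq invf_le1 ?ltr0n // ler1n.
have [lam_gt0 lamq lam_ratio ratio_lam] := margin_window th_gt0 q_ge0 thq_le1 lam_near.
have lamz_lt2 : lam * l1norm z < 2.
  have -> : lam * l1norm z = 2 * n%:R * (lam * q) by rewrite /q; field.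
  have two : 2 = 2 * n%:R * (margin z 1 + q) :> R by rewrite thq; field.
  by rewrite {2}two ltr_pM2l ?mulr_gt0 ?ltr0n.
have z1_lt2 : 1 * l1norm z < 2 by rewrite mul1r.
rewrite -[in RHS](scale1r z); apply: normal_fan_eq.
- by apply: lens_normal_cone_match; rewrite ?ltr01 // marginE mul1r.
- by apply: lens_normal_cone_match; rewrite ?ltr01.
Qed.
End NearOne.

Theorem lemma6p5 (R : realType) (n : nat) (z : 'rV[R]_n) :
  aff_dim_eq (@cross_polytope R n `&` translate z (@cross_polytope R n)) n ->
  exists2 eps : R, 0 < eps &
    forall lam : R, 1 - eps < lam < 1 + eps ->
      normal_fan (@cross_polytope R n `&` translate (lam *: z) (@cross_polytope R n))
      = normal_fan (@cross_polytope R n `&` translate z (@cross_polytope R n)).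
Proof.
move=> full; have [n0 | n_gt0] := posnP n.
  exists 1 => // lam _; suff -> : lam *: z = z by [].
  by apply/matrixP => ? [j j_lt]; exfalso; move: j_lt; rewrite n0.
rewrite cross_polytope_meet_translate // in full.
have z_lt2 := lens_full_dim full.
exists (margin z 1); first by apply: margin_gt0; rewrite ?mul1r.
move=> lam lam_near; rewrite !cross_polytope_meet_translate //.
exact: lens_normal_fan_near1.
Qed.
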